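(* Let $0<L<\infty$, $\varphi\in(0,1)$, $\kappa_f,\kappa_s,h_v,c_{p,f},\dot m_c,A_c>0$, $T_b,q_{HG}\in\mathbb R$, and consider the boundary value problem for $(T_f,T_s)$ on $[0,L]$: $$-\varphi\kappa_fT_f''+c_{p,f}\frac{\dot m_c}{A_c}T_f'=h_v(T_s-T_f),\qquad (1-\varphi)\kappa_sT_s''=h_v(T_s-T_f)\quad\text{on }(0,L),$$ $$T_f(0)=T_s(0)=T_b,\quad (1-\varphi)\kappa_sT_s'(L)=q_{HG}-c_{p,f}\frac{\dot m_c}{A_c}(T_s(L)-T_f(L)),\quad T_f'(L)=\frac{h_vA_c}{c_{p,f}\dot m_c}(T_s(L)-T_f(L)).$$ Then: (1) this problem has a unique solution; (2) if $q_{HG}>0$, then $T_s-T_f$ is positive, $T_f$ is monotonically increasing with $T_f(y)\ge T_b$ for $y\in[0,L]$, and $T_s$ is monotonically increasing with $T_s(y)\ge T_b$ for $y\in[0,L]$; (3) if $q_{HG}=0$, then $T_f(y)=T_s(y)=T_b$ for all $y\in[0,L]$. *)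

From Stdlib Require Import Reals.
From Coquelicot Require Import Coquelicot.
Open Scope R_scope.

(* The unknowns are functions R -> R; only their behaviour on
   [0, L] matters.  They are required to be twice differentiable at every
   point of [0, L] (so that T'(L) and the second derivatives make sense). *)
Definition is_solution (L phi kf ks hv cpf mc Ac Tb qHG : R)
    (Tf Ts : R -> R) : Prop :=
  (forall y, 0 <= y <= L ->
     ex_derive Tf y /\ ex_derive (Derive Tf) y /\
     ex_derive Ts y /\ ex_derive (Derive Ts) y) /\
  (forall y, 0 < y < L ->
     - phi * kf * Derive_n Tf 2 y + cpf * (mc / Ac) * Derive Tf y
       = hv * (Ts y - Tf y) /\
     (1 - phi) * ks * Derive_n Ts 2 y = hv * (Ts y - Tf y)) /\
  Tf 0 = Tb /\ Ts 0 = Tb /\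
  (1 - phi) * ks * Derive Ts L = qHG - cpf * (mc / Ac) * (Ts L - Tf L) /\
  Derive Tf L = (hv * Ac) / (cpf * mc) * (Ts L - Tf L).

From Stdlib Require Import Reals Lra.
From Coquelicot Require Import Coquelicot.
Open Scope R_scope.

(* Write [a = phi kf], [b = (1 - phi) ks], [c = cpf mc / Ac], [h = hv] and
   [D = Ts - Tf].  The fluid equation makes [exp (- c y / a) (Tf' y - K)] monotone
   as soon as [h D - c K] has a sign; with the outlet condition this bounds [Tf']
   by [h / c] times the maximum of [D].  Hence at a positive interior maximum of
   [D] we get [D'' = h D / b + (h D - c Tf') / a > 0], and a positive maximum at
   [y = L] would have [D'(L) < 0] by the flux conditions when [qHG <= 0]: this is
   a maximum principle [D <= 0].
   Applied to [-(Tf, Ts)] and to differences of solutions (the problem is linear)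
   it gives [D >= 0] for [qHG >= 0], uniqueness, and the case [qHG = 0]; the same
   one-sided arguments give [D > 0] and the monotonicity for [qHG > 0].

   For existence, [Tf = exp (l y)], [Ts = (1 + n) exp (l y)] solves both equations
   at the three real roots [l1 < 0 < l2 < c / a < l3] of a cubic.  The two
   homogeneous boundary conditions cut the mode coefficients down to a line, the
   additive constant is fixed by [Tb], and on that line the heat flux at [L] is a
   nonzero linear function by uniqueness, so every [qHG] is reached. *)

Lemma small_step d e : 0 < d -> 0 < e -> exists t, 0 < t < d /\ t <= e.
Proof.
  intros hd he. exists (Rmin d e / 2).
  pose proof (Rmin_l d e); pose proof (Rmin_r d e); pose proof (Rmin_pos d e hd he).
  lra.
Qed.

Lemma is_derive_pos_local (f : R -> R) x l : is_derive f x l -> 0 < l ->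
  exists d, 0 < d /\ forall t, 0 < t < d -> f (x - t) < f x < f (x + t).
Proof.
  intros Hf hl. apply is_derive_Reals in Hf.
  destruct (Hf (l / 2)) as [d Hd]; [lra|].
  exists d; split; [apply cond_pos|]. intros t ht.
  assert (quotient_pos : forall u, u <> 0 -> Rabs u < d -> 0 < (f (x + u) - f x) / u).
  { intros u hu hud. specialize (Hd u hu hud). apply Rabs_def2 in Hd. lra. }
  assert (Hr := quotient_pos t ltac:(lra) ltac:(rewrite Rabs_right; lra)).
  assert (Hl := quotient_pos (- t) ltac:(lra) ltac:(rewrite Rabs_left; lra)).
  replace (x + - t) with (x - t) in Hl by ring.
  assert (0 < f (x + t) - f x).
  { replace (f (x + t) - f x) with ((f (x + t) - f x) / t * t) by (field; lra).
    apply Rmult_lt_0_compat; lra. }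
  assert (0 < f x - f (x - t)).
  { replace (f x - f (x - t)) with ((f (x - t) - f x) / (- t) * t) by (field; lra).
    apply Rmult_lt_0_compat; lra. }
  lra.
Qed.

Lemma is_derive_neg_local (f : R -> R) x l : is_derive f x l -> l < 0 ->
  exists d, 0 < d /\ forall t, 0 < t < d -> f (x + t) < f x < f (x - t).
Proof.
  intros Hf hl.
  destruct (is_derive_pos_local (fun y => - f y) x (- l)) as [d [hd Hd]];
    [apply (is_derive_opp f); exact Hf | lra |].
  exists d; split; [exact hd|]. intros t ht. specialize (Hd t ht). lra.
Qed.

Lemma is_derive_MVT (f f' : R -> R) x y : x < y ->
  (forall t, x <= t <= y -> is_derive f t (f' t)) ->
  exists z, x < z < y /\ f y - f x = f' z * (y - x).
Proof.
  intros hxy Hf. destruct (MVT_cor2 f f' x y hxy) as [z [Hz hz]].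
  - intros t ht. apply is_derive_Reals, Hf, ht.
  - exists z; split; assumption.
Qed.

Lemma is_derive_nondecreasing (f f' : R -> R) x y : x <= y ->
  (forall t, x <= t <= y -> is_derive f t (f' t)) ->
  (forall t, x < t < y -> 0 <= f' t) -> f x <= f y.
Proof.
  intros hxy Hf Hpos. destruct (Req_dec x y) as [<-|hne]; [lra|].
  destruct (is_derive_MVT f f' x y) as [z [hz Hz]]; [lra|exact Hf|].
  specialize (Hpos z hz). nra.
Qed.

Lemma is_derive_eq0_on_const (f : R -> R) x l lo hi v : is_derive f x l -> lo < x < hi ->
  (forall t, lo <= t <= hi -> f t = v) -> l = 0.
Proof.
  intros Hf hx Hv.
  assert (Hconst : is_derive (fun _ => v) x l).
  { apply (is_derive_ext_loc f); [|exact Hf].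
    assert (hd : 0 < Rmin (x - lo) (hi - x)) by (apply Rmin_pos; lra).
    exists (mkposreal _ hd). intros t Ht. apply Hv.
    apply Rabs_def2 in Ht; simpl in Ht.
    pose proof (Rmin_l (x - lo) (hi - x)); pose proof (Rmin_r (x - lo) (hi - x)).
    unfold minus, plus, opp in Ht; simpl in Ht. lra. }
  rewrite <- (is_derive_unique _ _ _ Hconst). apply Derive_const.
Qed.

Lemma is_derive_exp_weighted (f : R -> R) (f' k K x : R) : is_derive f x f' ->
  is_derive (fun t => exp (k * t) * (f t - K)) x (exp (k * x) * (k * (f x - K) + f')).
Proof.
  intros Hf. auto_derive.
  - exists f'. exact Hf.
  - replace (Derive (fun t : R => f t) x) with f' by (symmetry; apply is_derive_unique, Hf). ring.
Qed.

Lemma derive_ge0_at_right_max (g : R -> R) lo x l : lo < x -> is_derive g x l ->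
  (forall t, lo <= t <= x -> g t <= g x) -> 0 <= l.
Proof.
  intros hx Hg Hmax. destruct (Rlt_or_le l 0) as [hl|]; [exfalso|assumption].
  destruct (is_derive_neg_local g x l Hg hl) as [d [hd Hd]].
  destruct (small_step d (x - lo)) as [t [ht hte]]; [lra|lra|].
  specialize (Hd t ht). specialize (Hmax (x - t) ltac:(lra)). lra.
Qed.

Lemma derive_le0_at_left_max (g : R -> R) x hi l : x < hi -> is_derive g x l ->
  (forall t, x <= t <= hi -> g t <= g x) -> l <= 0.
Proof.
  intros hx Hg Hmax. destruct (Rlt_or_le 0 l) as [hl|]; [exfalso|assumption].
  destruct (is_derive_pos_local g x l Hg hl) as [d [hd Hd]].
  destruct (small_step d (hi - x)) as [t [ht hte]]; [lra|lra|].
  specialize (Hd t ht). specialize (Hmax (x + t) ltac:(lra)). lra.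
Qed.

Lemma derive_eq0_at_interior_max (g : R -> R) lo hi x l : lo < x < hi -> is_derive g x l ->
  (forall t, lo <= t <= hi -> g t <= g x) -> l = 0.
Proof.
  intros hx Hg Hmax. apply Rle_antisym.
  - apply (derive_le0_at_left_max g x hi); [lra|exact Hg|]. intros t ht. apply Hmax; lra.
  - apply (derive_ge0_at_right_max g lo x); [lra|exact Hg|]. intros t ht. apply Hmax; lra.
Qed.

Lemma derive_le0_at_right_min (g : R -> R) lo x l : lo < x -> is_derive g x l ->
  (forall t, lo <= t <= x -> g x <= g t) -> l <= 0.
Proof.
  intros hx Hg Hmin.
  enough (0 <= - l) by lra.
  apply (derive_ge0_at_right_max (fun t => - g t) lo x); [exact hx| |].
  - apply (is_derive_opp g), Hg.
  - intros t ht. specialize (Hmin t ht). lra.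
Qed.

Lemma derive_ge0_at_left_min (g : R -> R) x hi l : x < hi -> is_derive g x l ->
  (forall t, x <= t <= hi -> g x <= g t) -> 0 <= l.
Proof.
  intros hx Hg Hmin.
  enough (- l <= 0) by lra.
  apply (derive_le0_at_left_max (fun t => - g t) x hi); [exact hx| |].
  - apply (is_derive_opp g), Hg.
  - intros t ht. specialize (Hmin t ht). lra.
Qed.

Lemma derive_eq0_at_interior_min (g : R -> R) lo hi x l : lo < x < hi -> is_derive g x l ->
  (forall t, lo <= t <= hi -> g x <= g t) -> l = 0.
Proof.
  intros hx Hg Hmin.
  enough (- l = 0) by lra.
  apply (derive_eq0_at_interior_max (fun t => - g t) lo hi x (- l) hx).
  - apply (is_derive_opp g), Hg.
  - intros t ht. specialize (Hmin t ht). lra.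
Qed.

Lemma derive2_pos_right_increase (g g' : R -> R) x hi l : x < hi ->
  (forall t, x <= t <= hi -> is_derive g t (g' t)) -> g' x = 0 ->
  is_derive g' x l -> 0 < l -> exists y, x < y <= hi /\ g x < g y.
Proof.
  intros hx Hg Hg'0 Hg' hl.
  destruct (is_derive_pos_local g' x l Hg' hl) as [d [hd Hd]].
  destruct (small_step d (hi - x)) as [t [ht hte]]; [lra|lra|].
  destruct (is_derive_MVT g g' x (x + t)) as [z [hz Hz]]; [lra| intros u hu; apply Hg; lra|].
  destruct (Hd (z - x) ltac:(lra)) as [_ Hpos].
  replace (x + (z - x)) with z in Hpos by ring.
  exists (x + t); split; [lra|].
  assert (0 < g' z * (x + t - x)) by (apply Rmult_lt_0_compat; lra). lra.
Qed.

Lemma derive2_neg_right_decrease (g g' : R -> R) x hi l : x < hi ->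
  (forall t, x <= t <= hi -> is_derive g t (g' t)) -> g' x = 0 ->
  is_derive g' x l -> l < 0 -> exists y, x < y <= hi /\ g y < g x.
Proof.
  intros hx Hg Hg'0 Hg' hl.
  destruct (derive2_pos_right_increase (fun t => - g t) (fun t => - g' t) x hi (- l))
    as [y [hy Hy]]; [exact hx| | lra | apply (is_derive_opp g'), Hg' | lra |].
  - intros t ht. apply (is_derive_opp g), Hg, ht.
  - exists y; split; [exact hy | lra].
Qed.

Section TwoTemperatureBVP.

Variables (L a b c h : R).
Hypotheses (hL : 0 < L) (ha : 0 < a) (hb : 0 < b) (hc : 0 < c) (hh : 0 < h).

(* The problem of [is_solution] with [a = phi kf], [b = (1 - phi) ks],
   [c = cpf mc / Ac], [h = hv], the derivatives given as explicit functions,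
   and the inlet condition weakened to [Tf 0 = Ts 0], so that solutions are
   closed under differences. *)
Local Set Implicit Arguments.
Record bvp (q : R) (Tf Tf' Tf'' Ts Ts' Ts'' : R -> R) : Prop := {
  bvp_Tf' : forall y, 0 <= y <= L -> is_derive Tf y (Tf' y);
  bvp_Tf'' : forall y, 0 <= y <= L -> is_derive Tf' y (Tf'' y);
  bvp_Ts' : forall y, 0 <= y <= L -> is_derive Ts y (Ts' y);
  bvp_Ts'' : forall y, 0 <= y <= L -> is_derive Ts' y (Ts'' y);
  bvp_fluid : forall y, 0 < y < L -> - a * Tf'' y + c * Tf' y = h * (Ts y - Tf y);
  bvp_solid : forall y, 0 < y < L -> b * Ts'' y = h * (Ts y - Tf y);
  bvp_inlet : Tf 0 = Ts 0;
  bvp_solid_flux : b * Ts' L = q - c * (Ts L - Tf L);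
  bvp_fluid_flux : Tf' L = h / c * (Ts L - Tf L)
}.
Local Unset Implicit Arguments.

Lemma bvp_opp {q : R} {Tf Tf' Tf'' Ts Ts' Ts'' : R -> R} : bvp q Tf Tf' Tf'' Ts Ts' Ts'' ->
  bvp (- q) (fun y => - Tf y) (fun y => - Tf' y) (fun y => - Tf'' y)
            (fun y => - Ts y) (fun y => - Ts' y) (fun y => - Ts'' y).
Proof.
  intros [dTf dTf' dTs dTs' Hfl Hso H0 HsL HfL].
  split.
  - intros y Hy. apply (is_derive_opp Tf), dTf, Hy.
  - intros y Hy. apply (is_derive_opp Tf'), dTf', Hy.
  - intros y Hy. apply (is_derive_opp Ts), dTs, Hy.
  - intros y Hy. apply (is_derive_opp Ts'), dTs', Hy.
  - intros y Hy. specialize (Hfl y Hy). lra.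
  - intros y Hy. specialize (Hso y Hy). lra.
  - lra.
  - lra.
  - rewrite HfL. ring.
Qed.

Lemma bvp_sub {q q' : R} {Tf Tf' Tf'' Ts Ts' Ts'' Uf Uf' Uf'' Us Us' Us'' : R -> R} :
  bvp q Tf Tf' Tf'' Ts Ts' Ts'' -> bvp q' Uf Uf' Uf'' Us Us' Us'' ->
  bvp (q - q') (fun y => Tf y - Uf y) (fun y => Tf' y - Uf' y) (fun y => Tf'' y - Uf'' y)
               (fun y => Ts y - Us y) (fun y => Ts' y - Us' y) (fun y => Ts'' y - Us'' y).
Proof.
  intros [dTf dTf' dTs dTs' Hfl Hso H0 HsL HfL] [dUf dUf' dUs dUs' Gfl Gso G0 GsL GfL].
  split.
  - intros y Hy. apply (is_derive_minus Tf Uf); auto.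
  - intros y Hy. apply (is_derive_minus Tf' Uf'); auto.
  - intros y Hy. apply (is_derive_minus Ts Us); auto.
  - intros y Hy. apply (is_derive_minus Ts' Us'); auto.
  - intros y Hy. specialize (Hfl y Hy). specialize (Gfl y Hy). lra.
  - intros y Hy. specialize (Hso y Hy). specialize (Gso y Hy). lra.
  - lra.
  - lra.
  - rewrite HfL, GfL. ring.
Qed.

Section Solution.

Context {q : R} {Tf Tf' Tf'' Ts Ts' Ts'' : R -> R}.
Hypothesis P : bvp q Tf Tf' Tf'' Ts Ts' Ts''.

Lemma bvp_diff_derive y : 0 <= y <= L ->
  is_derive (fun t => Ts t - Tf t) y (Ts' y - Tf' y).
Proof.
  intros Hy. apply (is_derive_minus Ts Tf); [apply (bvp_Ts' P) | apply (bvp_Tf' P)]; exact Hy.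
Qed.

Lemma bvp_diff_derive2 y : 0 <= y <= L ->
  is_derive (fun t => Ts' t - Tf' t) y (Ts'' y - Tf'' y).
Proof.
  intros Hy. apply (is_derive_minus Ts' Tf'); [apply (bvp_Ts'' P) | apply (bvp_Tf'' P)]; exact Hy.
Qed.

(* By the fluid equation,
   [a (exp (- c y / a) (Tf' y - K))' = exp (- c y / a) (c K - h (Ts y - Tf y))]. *)
Lemma bvp_weighted_flux_le K :
  (forall t, 0 <= t <= L -> h * (Ts t - Tf t) <= c * K) ->
  forall y, 0 <= y <= L -> exp (- (c / a) * y) * (Tf' y - K) <= exp (- (c / a) * L) * (Tf' L - K).
Proof.
  intros HK y Hy.
  apply (is_derive_nondecreasing (fun t => exp (- (c / a) * t) * (Tf' t - K))
           (fun t => exp (- (c / a) * t) * (- (c / a) * (Tf' t - K) + Tf'' t))).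
  - lra.
  - intros t Ht. apply is_derive_exp_weighted, (bvp_Tf'' P). lra.
  - intros t Ht. apply Rmult_le_pos; [apply Rlt_le, exp_pos|].
    pose proof (bvp_fluid P (y := t) ltac:(lra)). specialize (HK t ltac:(lra)).
    apply (Rmult_le_reg_l a); [exact ha|].
    replace (a * (- (c / a) * (Tf' t - K) + Tf'' t)) with (c * K - (- a * Tf'' t + c * Tf' t))
      by (field; lra).
    lra.
Qed.

Lemma bvp_flux_le M : (forall t, 0 <= t <= L -> Ts t - Tf t <= M) ->
  forall y, 0 <= y <= L -> Tf' y <= h / c * M.
Proof.
  intros HM y Hy.
  assert (hhc : 0 < h / c) by (apply Rdiv_lt_0_compat; assumption).
  assert (Hw := bvp_weighted_flux_le (h / c * M)).
  specialize (Hw ltac:(intros t Ht; specialize (HM t Ht);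
                       replace (c * (h / c * M)) with (h * M) by (field; lra); nra) y Hy).
  assert (HL : Tf' L - h / c * M <= 0).
  { rewrite (bvp_fluid_flux P). specialize (HM L ltac:(lra)). nra. }
  pose proof (exp_pos (- (c / a) * y)); pose proof (exp_pos (- (c / a) * L)).
  nra.
Qed.

Lemma bvp_diff_derive2_pos y : 0 < y < L -> 0 < Ts y - Tf y ->
  Tf' y <= h / c * (Ts y - Tf y) -> 0 < Ts'' y - Tf'' y.
Proof.
  intros Hy HD HTf'.
  pose proof (bvp_fluid P Hy) as Hfl; pose proof (bvp_solid P Hy) as Hso.
  assert (c * Tf' y <= h * (Ts y - Tf y)).
  { replace (h * (Ts y - Tf y)) with (c * (h / c * (Ts y - Tf y))) by (field; lra).
    apply Rmult_le_compat_l; lra. }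
  assert (0 < Ts'' y) by nra.
  assert (Tf'' y <= 0) by nra.
  lra.
Qed.

Lemma bvp_diff_nonpos : q <= 0 -> forall y, 0 <= y <= L -> Ts y - Tf y <= 0.
Proof.
  intros hq.
  set (D := fun t => Ts t - Tf t).
  destruct (continuity_ab_maj D 0 L) as [y0 [Hmax Hy0]]; [lra| |].
  { intros t Ht. apply derivable_continuous_pt. exists (Ts' t - Tf' t).
    apply is_derive_Reals, bvp_diff_derive, Ht. }
  enough (HM : D y0 <= 0) by (intros y Hy; specialize (Hmax y Hy); unfold D in *; lra).
  destruct (Rle_or_lt (D y0) 0) as [|hM]; [assumption|exfalso].
  assert (HTf' : forall t, 0 <= t <= L -> Tf' t <= h / c * D y0) by (apply bvp_flux_le, Hmax).
  assert (hhc : 0 < h / c) by (apply Rdiv_lt_0_compat; assumption).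
  destruct (Req_dec y0 0) as [->|hy0].
  { unfold D in hM. rewrite (bvp_inlet P) in hM. lra. }
  destruct (Req_dec y0 L) as [->|hy0L].
  - (* at the outlet both fluxes push [D] down *)
    assert (Hs : b * Ts' L < 0) by (rewrite (bvp_solid_flux P); unfold D in hM; nra).
    assert (Hf : 0 < Tf' L) by (rewrite (bvp_fluid_flux P); unfold D in hM; nra).
    assert (0 <= Ts' L - Tf' L).
    { apply (derive_ge0_at_right_max D 0 L); [lra | apply bvp_diff_derive; lra |].
      intros t Ht. apply Hmax. lra. }
    nra.
  - assert (Hin : 0 < y0 < L) by lra.
    assert (HD' : Ts' y0 - Tf' y0 = 0).
    { apply (derive_eq0_at_interior_max D 0 L y0);
        [exact Hin | apply bvp_diff_derive; lra | exact Hmax]. }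
    assert (HD'' : 0 < Ts'' y0 - Tf'' y0).
    { apply bvp_diff_derive2_pos; [exact Hin | exact hM | apply HTf'; lra]. }
    destruct (derive2_pos_right_increase D (fun t => Ts' t - Tf' t) y0 L (Ts'' y0 - Tf'' y0))
      as [y [Hy HDy]]; [lra | | exact HD' | | exact HD'' |].
    + intros t Ht. apply bvp_diff_derive. lra.
    + apply bvp_diff_derive2. lra.
    + specialize (Hmax y ltac:(lra)). lra.
Qed.

End Solution.

Section SolutionBounds.

Context {q : R} {Tf Tf' Tf'' Ts Ts' Ts'' : R -> R}.
Hypothesis P : bvp q Tf Tf' Tf'' Ts Ts' Ts''.

Lemma bvp_weighted_flux_ge K :
  (forall t, 0 <= t <= L -> c * K <= h * (Ts t - Tf t)) ->
  forall y, 0 <= y <= L -> exp (- (c / a) * L) * (Tf' L - K) <= exp (- (c / a) * y) * (Tf' y - K).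
Proof.
  intros HK y Hy.
  enough (exp (- (c / a) * y) * (- Tf' y - - K) <= exp (- (c / a) * L) * (- Tf' L - - K)) by lra.
  apply (bvp_weighted_flux_le (bvp_opp P)); [|exact Hy].
  intros t Ht. specialize (HK t Ht). lra.
Qed.

Lemma bvp_flux_ge m : (forall t, 0 <= t <= L -> m <= Ts t - Tf t) ->
  forall y, 0 <= y <= L -> h / c * m <= Tf' y.
Proof.
  intros Hm y Hy.
  enough (- Tf' y <= h / c * - m) by lra.
  apply (bvp_flux_le (bvp_opp P)); [|exact Hy].
  intros t Ht. specialize (Hm t Ht). lra.
Qed.

Lemma bvp_diff_nonneg : 0 <= q -> forall y, 0 <= y <= L -> 0 <= Ts y - Tf y.
Proof.
  intros hq y Hy.
  enough (- Ts y - - Tf y <= 0) by lra.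
  apply (bvp_diff_nonpos (bvp_opp P)); [lra | exact Hy].
Qed.

Lemma bvp_homogeneous : q = 0 -> forall y, 0 <= y <= L -> Tf y = Tf 0 /\ Ts y = Tf 0.
Proof.
  intros hq.
  assert (HD : forall t, 0 <= t <= L -> Ts t - Tf t = 0).
  { intros t Ht. apply Rle_antisym.
    - apply (bvp_diff_nonpos P); [lra | exact Ht].
    - apply bvp_diff_nonneg; [lra | exact Ht]. }
  assert (HTf' : forall t, 0 <= t <= L -> Tf' t = 0).
  { intros t Ht. apply Rle_antisym.
    - rewrite <- (Rmult_0_r (h / c)). apply (bvp_flux_le P); [|exact Ht].
      intros u Hu. rewrite HD by exact Hu. lra.
    - rewrite <- (Rmult_0_r (h / c)). apply bvp_flux_ge; [|exact Ht].
      intros u Hu. rewrite HD by exact Hu. lra. }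
  intros y Hy.
  assert (HTf : Tf y = Tf 0).
  { destruct (Req_dec y 0) as [->|hy]; [reflexivity|].
    destruct (is_derive_MVT Tf Tf' 0 y) as [z [hz Hz]];
      [lra | intros t Ht; apply (bvp_Tf' P); lra |].
    rewrite HTf' in Hz by lra. lra. }
  split; [exact HTf|]. specialize (HD y Hy). lra.
Qed.

Lemma bvp_fluid_flux_nonneg : 0 <= q -> forall y, 0 <= y <= L -> 0 <= Tf' y.
Proof.
  intros hq y Hy. rewrite <- (Rmult_0_r (h / c)).
  apply bvp_flux_ge; [|exact Hy]. apply bvp_diff_nonneg, hq.
Qed.

Lemma bvp_solid_flux_nonneg : 0 <= q -> forall y, 0 <= y <= L -> 0 <= Ts' y.
Proof.
  intros hq.
  assert (H0 : Tf' 0 <= Ts' 0).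
  { enough (0 <= Ts' 0 - Tf' 0) by lra.
    apply (derive_ge0_at_left_min (fun t => Ts t - Tf t) 0 L);
      [lra | apply (bvp_diff_derive P); lra |].
    intros t Ht. rewrite (bvp_inlet P), Rminus_diag. apply bvp_diff_nonneg; [exact hq | lra]. }
  intros y Hy.
  assert (Ts' 0 <= Ts' y).
  { apply (is_derive_nondecreasing Ts' Ts''); [lra | intros t Ht; apply (bvp_Ts'' P); lra |].
    intros t Ht. pose proof (bvp_solid P (y := t) ltac:(lra)).
    pose proof (bvp_diff_nonneg hq t ltac:(lra)). nra. }
  pose proof (bvp_fluid_flux_nonneg hq 0 ltac:(lra)). lra.
Qed.

Lemma bvp_fluid_nondecreasing : 0 <= q -> forall x y, 0 <= x -> x <= y -> y <= L -> Tf x <= Tf y.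
Proof.
  intros hq x y hx hxy hy. apply (is_derive_nondecreasing Tf Tf'); [exact hxy | |].
  - intros t Ht. apply (bvp_Tf' P). lra.
  - intros t Ht. apply bvp_fluid_flux_nonneg; [exact hq | lra].
Qed.

Lemma bvp_solid_nondecreasing : 0 <= q -> forall x y, 0 <= x -> x <= y -> y <= L -> Ts x <= Ts y.
Proof.
  intros hq x y hx hxy hy. apply (is_derive_nondecreasing Ts Ts'); [exact hxy | |].
  - intros t Ht. apply (bvp_Ts' P). lra.
  - intros t Ht. apply bvp_solid_flux_nonneg; [exact hq | lra].
Qed.

Lemma bvp_diff_pos_outlet : 0 < q -> 0 < Ts L - Tf L.
Proof.
  intros hq.
  destruct (Rlt_or_le 0 (Ts L - Tf L)) as [|Hle]; [assumption|exfalso].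
  assert (HL : Ts L - Tf L = 0) by (pose proof (bvp_diff_nonneg ltac:(lra) L ltac:(lra)); lra).
  assert (Ts' L - Tf' L <= 0).
  { apply (derive_le0_at_right_min (fun t => Ts t - Tf t) 0 L);
      [lra | apply (bvp_diff_derive P); lra |].
    intros t Ht. rewrite HL. apply bvp_diff_nonneg; [lra | exact Ht]. }
  pose proof (bvp_solid_flux P) as HsL. pose proof (bvp_fluid_flux P) as HfL.
  rewrite HL in HsL, HfL. nra.
Qed.

(* [exp (- c y / a) Tf' y] is nonincreasing because [D >= 0], and positive at [L]. *)
Lemma bvp_fluid_flux_pos : 0 < q -> forall y, 0 <= y <= L -> 0 < Tf' y.
Proof.
  intros hq y Hy.
  assert (Hw : exp (- (c / a) * L) * (Tf' L - 0) <= exp (- (c / a) * y) * (Tf' y - 0)).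
  { apply bvp_weighted_flux_ge; [|exact Hy].
    intros t Ht. pose proof (bvp_diff_nonneg ltac:(lra) t Ht). nra. }
  assert (HL : 0 < Tf' L).
  { rewrite (bvp_fluid_flux P). apply Rmult_lt_0_compat.
    - apply Rdiv_lt_0_compat; assumption.
    - apply bvp_diff_pos_outlet, hq. }
  pose proof (exp_pos (- (c / a) * L)); pose proof (exp_pos (- (c / a) * y)).
  nra.
Qed.

Lemma bvp_diff_pos : 0 < q -> forall y, 0 < y <= L -> 0 < Ts y - Tf y.
Proof.
  intros hq y Hy.
  destruct (Req_dec y L) as [->|hyL]; [apply bvp_diff_pos_outlet, hq|].
  destruct (Rlt_or_le 0 (Ts y - Tf y)) as [|Hle]; [assumption|exfalso].
  assert (Hin : 0 < y < L) by lra.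
  assert (Hmin : forall t, 0 <= t <= L -> Ts y - Tf y <= Ts t - Tf t).
  { intros t Ht. pose proof (bvp_diff_nonneg ltac:(lra) t Ht). lra. }
  assert (Hy0 : Ts y - Tf y = 0) by (pose proof (bvp_diff_nonneg ltac:(lra) y ltac:(lra)); lra).
  assert (HD' : Ts' y - Tf' y = 0).
  { apply (derive_eq0_at_interior_min (fun t => Ts t - Tf t) 0 L y);
      [exact Hin | apply (bvp_diff_derive P); lra | exact Hmin]. }
  assert (HD'' : Ts'' y - Tf'' y < 0).
  { pose proof (bvp_fluid P Hin) as Hfl; pose proof (bvp_solid P Hin) as Hso.
    rewrite Hy0 in Hfl, Hso.
    pose proof (bvp_fluid_flux_pos hq y ltac:(lra)).
    assert (Ts'' y = 0) by nra.
    assert (0 < Tf'' y) by nra.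
    lra. }
  destruct (derive2_neg_right_decrease (fun t => Ts t - Tf t) (fun t => Ts' t - Tf' t)
              y L (Ts'' y - Tf'' y)) as [z [Hz HDz]]; [lra | | exact HD' | | exact HD'' |].
  - intros t Ht. apply (bvp_diff_derive P). lra.
  - apply (bvp_diff_derive2 P). lra.
  - specialize (Hmin z ltac:(lra)). lra.
Qed.

End SolutionBounds.

End TwoTemperatureBVP.

Definition char_poly (a b c h x : R) := a * b * x ^ 3 - b * c * x ^ 2 - h * (a + b) * x + h * c.

Lemma IVT_strict (f : R -> R) x y : continuity f -> x < y -> f x < 0 -> 0 < f y ->
  exists z, x < z < y /\ f z = 0.
Proof.
  intros Hf hxy hx hy. destruct (IVT f x y Hf hxy hx hy) as [z [hz Hz]].
  exists z. split; [|exact Hz].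
  split; apply Rnot_le_lt; intros E; [replace z with x in Hz | replace z with y in Hz]; lra.
Qed.

Lemma char_poly_roots a b c h : 0 < a -> 0 < b -> 0 < c -> 0 < h ->
  exists l1 l2 l3, l1 < 0 < l2 /\ l2 < c / a < l3 /\
    char_poly a b c h l1 = 0 /\ char_poly a b c h l2 = 0 /\ char_poly a b c h l3 = 0.
Proof.
  intros ha hb hc hh.
  set (p := char_poly a b c h).
  assert (Hp : continuity p) by (unfold p, char_poly; reg).
  assert (hca : 0 < c / a) by (apply Rdiv_lt_0_compat; assumption).
  assert (Hca : p (c / a) = - (h * b) * (c / a)) by (unfold p, char_poly; field; lra).
  assert (Hca_neg : p (c / a) < 0).
  { rewrite Hca. assert (0 < h * b * (c / a)) by (apply Rmult_lt_0_compat; nra). lra. }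
  set (S := b * c + h * (a + b) + h * c).
  set (M := 1 + S / (a * b)).
  assert (HM : a * b * M = a * b + S) by (unfold M; field; nra).
  assert (hS : 0 < S) by (unfold S; nra).
  assert (hM1 : 1 < M) by (unfold M; pose proof (Rdiv_lt_0_compat S (a * b) hS ltac:(nra)); lra).
  assert (hMca : c / a < M).
  { enough (c / a * (a * b) < M * (a * b)) by nra.
    replace (c / a * (a * b)) with (b * c) by (field; lra). unfold S in HM. nra. }
  assert (HMM : M <= M * M) by nra.
  assert (Hlin : h * (a + b) * M <= h * (a + b) * (M * M)) by (apply Rmult_le_compat_l; nra).
  assert (0 < a * b * (M * M)) by (apply Rmult_lt_0_compat; nra).
  assert (0 < h * c * (M * M)) by (apply Rmult_lt_0_compat; nra).
  assert (0 < h * c) by nra.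
  assert (HpM : 0 < p M).
  { replace (p M) with ((a * b + h * (a + b) + h * c) * (M * M) - h * (a + b) * M + h * c)
      by (unfold p, char_poly; unfold S in HM; rewrite <- Rmult_assoc; nra).
    lra. }
  assert (HpmM : p (- M) < 0).
  { replace (p (- M)) with (- (a * b + S + b * c) * (M * M) + h * (a + b) * M + h * c)
      by (unfold p, char_poly; nra).
    assert (h * c <= h * c * (M * M))
      by (rewrite <- (Rmult_1_r (h * c)) at 1; apply Rmult_le_compat_l; nra).
    assert (0 < b * c * (M * M)) by (apply Rmult_lt_0_compat; nra).
    unfold S. lra. }
  destruct (IVT_strict p (- M) 0) as [l1 [hl1 E1]];
    [exact Hp | lra | exact HpmM | unfold p, char_poly; nra |].
  destruct (IVT_strict (fun x => - p x) 0 (c / a)) as [l2 [hl2 E2]];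
    [apply continuity_opp, Hp | exact hca | unfold p, char_poly; nra | lra |].
  destruct (IVT_strict p (c / a) M) as [l3 [hl3 E3]];
    [exact Hp | exact hMca | exact Hca_neg | exact HpM |].
  exists l1, l2, l3. unfold p in *. repeat split; lra.
Qed.

(* The exponential mode [Tf = exp (l y)], [Ts = (1 + n) exp (l y)] solves the fluid
   equation iff [h n = l (c - a l)]; it then also solves the solid equation iff
   [l = 0] or [char_poly l = 0]. *)
Definition mode_ratio (a c h l : R) := l * (c - a * l) / h.

Lemma char_poly_mode_ratio a b c h l : h <> 0 -> char_poly a b c h l = 0 ->
  b * (1 + mode_ratio a c h l) * l ^ 2 = h * mode_ratio a c h l.
Proof.
  intros hh Hl. unfold mode_ratio.
  transitivity (h * (l * (c - a * l) / h) - l * char_poly a b c h l / h).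
  - unfold char_poly. field. exact hh.
  - rewrite Hl. field. exact hh.
Qed.

Definition expsum (K C1 C2 C3 l1 l2 l3 y : R) :=
  K + C1 * exp (l1 * y) + C2 * exp (l2 * y) + C3 * exp (l3 * y).

Section ModeSums.

Variables (L a b c h l1 l2 l3 : R).
Hypotheses (hc : c <> 0) (hh : h <> 0).
Hypotheses (root1 : char_poly a b c h l1 = 0) (root2 : char_poly a b c h l2 = 0)
  (root3 : char_poly a b c h l3 = 0).

Let n1 := mode_ratio a c h l1.
Let n2 := mode_ratio a c h l2.
Let n3 := mode_ratio a c h l3.

Definition fluid_modes K C1 C2 C3 := expsum K C1 C2 C3 l1 l2 l3.
Definition solid_modes K C1 C2 C3 :=
  expsum K (C1 * (1 + n1)) (C2 * (1 + n2)) (C3 * (1 + n3)) l1 l2 l3.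

Section Coefficients.

Variables (K C1 C2 C3 : R).

Let Tf := fluid_modes K C1 C2 C3.
Let Tf' := fluid_modes 0 (C1 * l1) (C2 * l2) (C3 * l3).
Let Tf'' := fluid_modes 0 (C1 * l1 ^ 2) (C2 * l2 ^ 2) (C3 * l3 ^ 2).
Let Ts := solid_modes K C1 C2 C3.
Let Ts' := solid_modes 0 (C1 * l1) (C2 * l2) (C3 * l3).
Let Ts'' := solid_modes 0 (C1 * l1 ^ 2) (C2 * l2 ^ 2) (C3 * l3 ^ 2).

Lemma modes_derive y :
  is_derive Tf y (Tf' y) /\ is_derive Tf' y (Tf'' y) /\
  is_derive Ts y (Ts' y) /\ is_derive Ts' y (Ts'' y).
Proof.
  unfold Tf, Tf', Tf'', Ts, Ts', Ts'', fluid_modes, solid_modes.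
  unfold expsum. split; [|split; [|split]]; auto_derive; trivial; ring.
Qed.

Lemma modes_bvp : C1 * n1 + C2 * n2 + C3 * n3 = 0 ->
  C1 * l1 ^ 2 * exp (l1 * L) + C2 * l2 ^ 2 * exp (l2 * L) + C3 * l3 ^ 2 * exp (l3 * L) = 0 ->
  bvp L a b c h (b * Ts' L + c * (Ts L - Tf L)) Tf Tf' Tf'' Ts Ts' Ts''.
Proof.
  intros Hinlet Houtlet.
  assert (Hsolid := char_poly_mode_ratio a b c h).
  split; try (intros y _; apply modes_derive).
  - intros y _. unfold Tf, Tf', Tf'', Ts, fluid_modes, solid_modes, expsum, n1, n2, n3, mode_ratio.
    field. exact hh.
  - intros y _. unfold Ts'', Ts, Tf, fluid_modes, solid_modes, expsum.
    transitivity (C1 * exp (l1 * y) * (b * (1 + n1) * l1 ^ 2)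
                  + C2 * exp (l2 * y) * (b * (1 + n2) * l2 ^ 2)
                  + C3 * exp (l3 * y) * (b * (1 + n3) * l3 ^ 2)); [ring|].
    unfold n1, n2, n3. rewrite !Hsolid by assumption. ring.
  - unfold Tf, Ts, fluid_modes, solid_modes, expsum. rewrite !Rmult_0_r, exp_0. lra.
  - ring.
  - apply Rminus_diag_uniq. rewrite <- (Rmult_0_r (a / c)), <- Houtlet.
    unfold Tf, Tf', Ts, fluid_modes, solid_modes, expsum, n1, n2, n3, mode_ratio.
    field. split; assumption.
Qed.

End Coefficients.

End ModeSums.

Lemma vandermonde3 z1 z2 z3 l1 l2 l3 : l3 <> l1 -> l3 <> l2 ->
  z1 + z2 + z3 = 0 -> z1 * l1 + z2 * l2 + z3 * l3 = 0 ->
  z1 * l1 ^ 2 + z2 * l2 ^ 2 + z3 * l3 ^ 2 = 0 -> z3 = 0.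
Proof.
  intros h31 h32 H0 H1 H2.
  assert (Hz : z3 * ((l3 - l1) * (l3 - l2)) = 0).
  { transitivity ((z1 * l1 ^ 2 + z2 * l2 ^ 2 + z3 * l3 ^ 2)
                  - (l1 + l2) * (z1 * l1 + z2 * l2 + z3 * l3)
                  + l1 * l2 * (z1 + z2 + z3)); [ring|].
    rewrite H0, H1, H2. ring. }
  apply Rmult_integral in Hz as [|Hz]; [assumption|].
  apply Rmult_integral in Hz as [|]; exfalso; lra.
Qed.

Lemma modes_independent a c h l1 l2 l3 x1 x2 x3 :
  a <> 0 -> h <> 0 -> l3 <> 0 -> l3 <> l1 -> l3 <> l2 ->
  let n1 := mode_ratio a c h l1 in let n2 := mode_ratio a c h l2 in
  let n3 := mode_ratio a c h l3 in
  x1 * l1 + x2 * l2 + x3 * l3 = 0 ->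
  x1 * n1 * l1 + x2 * n2 * l2 + x3 * n3 * l3 = 0 ->
  x1 * n1 + x2 * n2 + x3 * n3 = 0 -> x3 = 0.
Proof.
  intros ha hh hl3 h31 h32 n1 n2 n3 H0 Hnl Hn.
  assert (H1 : x1 * l1 * l1 + x2 * l2 * l2 + x3 * l3 * l3 = 0).
  { apply (Rmult_eq_reg_l (- a)); [|lra].
    transitivity (h * (x1 * n1 + x2 * n2 + x3 * n3) - c * (x1 * l1 + x2 * l2 + x3 * l3)).
    - unfold n1, n2, n3, mode_ratio. field. exact hh.
    - rewrite H0, Hn. ring. }
  assert (H2 : x1 * l1 * l1 ^ 2 + x2 * l2 * l2 ^ 2 + x3 * l3 * l3 ^ 2 = 0).
  { apply (Rmult_eq_reg_l (- a)); [|lra].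
    transitivity (h * (x1 * n1 * l1 + x2 * n2 * l2 + x3 * n3 * l3)
                  - c * (x1 * l1 * l1 + x2 * l2 * l2 + x3 * l3 * l3)).
    - unfold n1, n2, n3, mode_ratio. field. exact hh.
    - rewrite Hnl, H1. ring. }
  assert (Hz : x3 * l3 = 0) by (apply (vandermonde3 (x1 * l1) (x2 * l2)) with l1 l2 l3; auto; lra).
  apply Rmult_integral in Hz as [|]; [assumption | contradiction].
Qed.

Section Existence.

Variables (L a b c h l1 l2 l3 : R).
Hypotheses (hL : 0 < L) (ha : 0 < a) (hb : 0 < b) (hc : 0 < c) (hh : 0 < h).
Hypotheses (hl1 : l1 < 0) (hl2 : 0 < l2) (hl2ca : l2 < c / a) (hl3 : c / a < l3).
Hypotheses (root1 : char_poly a b c h l1 = 0) (root2 : char_poly a b c h l2 = 0)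
  (root3 : char_poly a b c h l3 = 0).

Let n1 := mode_ratio a c h l1.
Let n2 := mode_ratio a c h l2.
Let n3 := mode_ratio a c h l3.
Let s1 := l1 ^ 2 * exp (l1 * L).
Let s2 := l2 ^ 2 * exp (l2 * L).
Let s3 := l3 ^ 2 * exp (l3 * L).

(* [w] is orthogonal to [n] (inlet condition) and to [s] (fluid flux condition at [L]). *)
Let w1 := n2 * s3 - n3 * s2.
Let w2 := n3 * s1 - n1 * s3.
Let w3 := n1 * s2 - n2 * s1.

Lemma mode_weight3_neg : w3 < 0.
Proof.
  assert (hn1 : n1 < 0).
  { unfold n1, mode_ratio. apply Rdiv_neg_pos; [|exact hh]. nra. }
  assert (hn2 : 0 < n2).
  { unfold n2, mode_ratio. apply Rdiv_lt_0_compat; [|exact hh].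
    assert (a * l2 < c).
    { apply (Rmult_lt_compat_l a) in hl2ca; [|exact ha]. field_simplify in hl2ca; lra. }
    nra. }
  assert (0 < s1) by (unfold s1; apply Rmult_lt_0_compat; [simpl; nra | apply exp_pos]).
  assert (0 < s2) by (unfold s2; apply Rmult_lt_0_compat; [simpl; nra | apply exp_pos]).
  unfold w3. nra.
Qed.

Let Tf K t := fluid_modes l1 l2 l3 K (t * w1) (t * w2) (t * w3).
Let Tf' t := fluid_modes l1 l2 l3 0 (t * w1 * l1) (t * w2 * l2) (t * w3 * l3).
Let Tf'' t := fluid_modes l1 l2 l3 0 (t * w1 * l1 ^ 2) (t * w2 * l2 ^ 2) (t * w3 * l3 ^ 2).
Let Ts K t := solid_modes a c h l1 l2 l3 K (t * w1) (t * w2) (t * w3).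
Let Ts' t := solid_modes a c h l1 l2 l3 0 (t * w1 * l1) (t * w2 * l2) (t * w3 * l3).
Let Ts'' t := solid_modes a c h l1 l2 l3 0 (t * w1 * l1 ^ 2) (t * w2 * l2 ^ 2) (t * w3 * l3 ^ 2).

Let heat_flux K t := b * Ts' t L + c * (Ts K t L - Tf K t L).

Lemma modes_family_bvp K t :
  bvp L a b c h (heat_flux K t) (Tf K t) (Tf' t) (Tf'' t) (Ts K t) (Ts' t) (Ts'' t).
Proof.
  apply modes_bvp; try assumption; try lra.
  - fold n1 n2 n3. unfold w1, w2, w3. ring.
  - transitivity (t * (w1 * s1 + w2 * s2 + w3 * s3));
      [unfold s1, s2, s3; ring | unfold w1, w2, w3; ring].
Qed.

Lemma heat_flux_linear K t : heat_flux K t = t * heat_flux 0 1.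
Proof.
  unfold heat_flux, Tf, Ts, Ts', fluid_modes, solid_modes, expsum. ring.
Qed.

(* If the unit mode combination carried no heat flux, uniqueness for [q = 0] would
   force it to be constant, which the independence of the modes rules out since [w3 <> 0]. *)
Lemma heat_flux_nonzero : heat_flux 0 1 <> 0.
Proof.
  intros H0.
  pose proof (modes_family_bvp 0 1) as P. rewrite H0 in P.
  assert (Hconst := bvp_homogeneous L a b c h hL ha hb hc hh P eq_refl).
  set (y := L / 2).
  assert (Hy : 0 < y < L) by (unfold y; lra).
  destruct (modes_derive a c h l1 l2 l3 0 (1 * w1) (1 * w2) (1 * w3) y) as (dTf & _ & dTs & _).
  assert (HTf' : Tf' 1 y = 0).
  { apply (is_derive_eq0_on_const (Tf 0 1) y _ 0 L (Tf 0 1 0) dTf Hy).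
    intros u Hu. apply Hconst, Hu. }
  assert (HTs' : Ts' 1 y = 0).
  { apply (is_derive_eq0_on_const (Ts 0 1) y _ 0 L (Tf 0 1 0) dTs Hy).
    intros u Hu. apply Hconst, Hu. }
  assert (HD : Ts 0 1 y - Tf 0 1 y = 0).
  { destruct (Hconst y ltac:(lra)) as [E1 E2]. rewrite E1, E2. ring. }
  assert (hca : 0 < c / a) by (apply Rdiv_lt_0_compat; assumption).
  assert (Hw3 : w3 * exp (l3 * y) = 0).
  { apply (modes_independent a c h l1 l2 l3 (w1 * exp (l1 * y)) (w2 * exp (l2 * y))); try lra.
    all: fold n1 n2 n3.
    - rewrite <- HTf'. unfold Tf', fluid_modes, expsum. ring.
    - transitivity (Ts' 1 y - Tf' 1 y); [|rewrite HTf', HTs'; ring].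
      unfold Tf', Ts', fluid_modes, solid_modes, expsum. fold n1 n2 n3. ring.
    - rewrite <- HD. unfold Tf, Ts, fluid_modes, solid_modes, expsum. fold n1 n2 n3. ring. }
  apply Rmult_integral in Hw3 as [Hw3|Hexp]; [|pose proof (exp_pos (l3 * y)); lra].
  pose proof mode_weight3_neg. lra.
Qed.

Lemma modes_solve q Tb : exists Tf Tf' Tf'' Ts Ts' Ts'' : R -> R,
  (forall y, is_derive Tf y (Tf' y) /\ is_derive Tf' y (Tf'' y) /\
             is_derive Ts y (Ts' y) /\ is_derive Ts' y (Ts'' y)) /\
  bvp L a b c h q Tf Tf' Tf'' Ts Ts' Ts'' /\ Tf 0 = Tb.
Proof.
  set (t := q / heat_flux 0 1).
  set (K := Tb - t * (w1 + w2 + w3)).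
  exists (Tf K t), (Tf' t), (Tf'' t), (Ts K t), (Ts' t), (Ts'' t).
  split; [|split].
  - intros y. apply modes_derive.
  - replace q with (heat_flux K t)
      by (rewrite heat_flux_linear; unfold t; field; apply heat_flux_nonzero).
    apply modes_family_bvp.
  - unfold Tf, fluid_modes, expsum, K. rewrite !Rmult_0_r, exp_0. ring.
Qed.

End Existence.

Section PhysicalParameters.

Variables (L phi kf ks hv cpf mc Ac Tb q : R).
Hypotheses (hL : 0 < L) (hphi : 0 < phi < 1) (hkf : 0 < kf) (hks : 0 < ks)
  (hhv : 0 < hv) (hcpf : 0 < cpf) (hmc : 0 < mc) (hAc : 0 < Ac).

Let a := phi * kf.
Let b := (1 - phi) * ks.
Let c := cpf * (mc / Ac).

Let ha : 0 < a. Proof. unfold a. nra. Qed.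
Let hb : 0 < b. Proof. unfold b. nra. Qed.
Let hc : 0 < c.
Proof. unfold c. apply Rmult_lt_0_compat; [|apply Rdiv_lt_0_compat]; assumption. Qed.

Let solution := is_solution L phi kf ks hv cpf mc Ac Tb q.

Lemma is_solution_bvp Tf Ts : solution Tf Ts ->
  bvp L a b c hv q Tf (Derive Tf) (Derive (Derive Tf)) Ts (Derive Ts) (Derive (Derive Ts)).
Proof.
  intros [Hd [Hode [H0f [H0s [HsL HfL]]]]].
  split; try (intros y Hy; destruct (Hd y Hy) as (? & ? & ? & ?); apply Derive_correct; assumption).
  - intros y Hy. destruct (Hode y Hy) as [Hfl _].
    change (Derive_n Tf 2 y) with (Derive (Derive Tf) y) in Hfl.
    rewrite <- Hfl. unfold a, c. ring.
  - intros y Hy. destruct (Hode y Hy) as [_ Hso]. exact Hso.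
  - congruence.
  - exact HsL.
  - rewrite HfL. f_equal. unfold c. field. split; lra.
Qed.

Lemma bvp_is_solution (Tf Tf' Tf'' Ts Ts' Ts'' : R -> R) :
  (forall y, is_derive Tf y (Tf' y) /\ is_derive Tf' y (Tf'' y) /\
             is_derive Ts y (Ts' y) /\ is_derive Ts' y (Ts'' y)) ->
  bvp L a b c hv q Tf Tf' Tf'' Ts Ts' Ts'' -> Tf 0 = Tb -> solution Tf Ts.
Proof.
  intros Hd [_ _ _ _ Hfl Hso H0 HsL HfL] HTb.
  assert (DTf : forall y, Derive Tf y = Tf' y) by (intros y; apply is_derive_unique, Hd).
  assert (DTs : forall y, Derive Ts y = Ts' y) by (intros y; apply is_derive_unique, Hd).
  assert (DDTf : forall y, Derive (Derive Tf) y = Tf'' y).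
  { intros y. rewrite (Derive_ext _ _ y DTf). apply is_derive_unique, Hd. }
  assert (DDTs : forall y, Derive (Derive Ts) y = Ts'' y).
  { intros y. rewrite (Derive_ext _ _ y DTs). apply is_derive_unique, Hd. }
  split; [|split; [|split; [|split; [|split]]]].
  - intros y _. destruct (Hd y) as (dTf & dTf' & dTs & dTs').
    split; [|split; [|split]].
    + exists (Tf' y). exact dTf.
    + apply (ex_derive_ext Tf'); [intros t; symmetry; apply DTf|]. exists (Tf'' y). exact dTf'.
    + exists (Ts' y). exact dTs.
    + apply (ex_derive_ext Ts'); [intros t; symmetry; apply DTs|]. exists (Ts'' y). exact dTs'.
  - intros y Hy. simpl. rewrite DDTf, DDTs, DTf.
    split; [rewrite <- (Hfl y Hy); unfold a, c; ring | apply Hso, Hy].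
  - exact HTb.
  - congruence.
  - rewrite DTs. exact HsL.
  - rewrite DTf, HfL. f_equal. unfold c. field. split; lra.
Qed.

Lemma is_solution_exists : exists Tf Ts, solution Tf Ts.
Proof.
  destruct (char_poly_roots a b c hv ha hb hc hhv)
    as (l1 & l2 & l3 & [hl1 hl2] & [hl2ca hl3] & root1 & root2 & root3).
  destruct (modes_solve L a b c hv l1 l2 l3 hL ha hb hc hhv hl1 hl2 hl2ca hl3
              root1 root2 root3 q Tb)
    as (Tf & Tf' & Tf'' & Ts & Ts' & Ts'' & Hd & P & HTb).
  exists Tf, Ts. apply (bvp_is_solution Tf Tf' Tf'' Ts Ts' Ts''); assumption.
Qed.

Lemma is_solution_unique Tf Ts Uf Us : solution Tf Ts -> solution Uf Us ->
  forall y, 0 <= y <= L -> Tf y = Uf y /\ Ts y = Us y.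
Proof.
  intros STs SUs y Hy.
  pose proof (bvp_sub L a b c hv (is_solution_bvp Tf Ts STs) (is_solution_bvp Uf Us SUs)) as P.
  destruct (bvp_homogeneous L a b c hv hL ha hb hc hhv P (Rminus_diag q) y Hy) as [Ef Es].
  destruct STs as (_ & _ & HTf & HTs & _); destruct SUs as (_ & _ & HUf & HUs & _).
  split; lra.
Qed.

Lemma is_solution_heated Tf Ts : 0 < q -> solution Tf Ts ->
  (forall y, 0 < y <= L -> Ts y - Tf y > 0) /\
  (forall x y, 0 <= x -> x <= y -> y <= L -> Tf x <= Tf y) /\
  (forall y, 0 <= y <= L -> Tb <= Tf y) /\
  (forall x y, 0 <= x -> x <= y -> y <= L -> Ts x <= Ts y) /\
  (forall y, 0 <= y <= L -> Tb <= Ts y).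
Proof.
  intros hq S.
  pose proof (is_solution_bvp Tf Ts S) as P.
  assert (HTf := bvp_fluid_nondecreasing L a b c hv hL ha hb hc hhv P (Rlt_le _ _ hq)).
  assert (HTs := bvp_solid_nondecreasing L a b c hv hL ha hb hc hhv P (Rlt_le _ _ hq)).
  destruct S as (_ & _ & HTf0 & HTs0 & _).
  split; [|split; [|split; [|split]]].
  - intros y Hy. apply Rlt_gt, (bvp_diff_pos L a b c hv hL ha hb hc hhv P hq y Hy).
  - exact HTf.
  - intros y Hy. rewrite <- HTf0. apply HTf; lra.
  - exact HTs.
  - intros y Hy. rewrite <- HTs0. apply HTs; lra.
Qed.

Lemma is_solution_insulated Tf Ts : q = 0 -> solution Tf Ts ->
  forall y, 0 <= y <= L -> Tf y = Tb /\ Ts y = Tb.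
Proof.
  intros hq S y Hy.
  destruct (bvp_homogeneous L a b c hv hL ha hb hc hhv (is_solution_bvp Tf Ts S) hq y Hy)
    as [Ef Es].
  destruct S as (_ & _ & HTf0 & _).
  rewrite Ef, Es, HTf0. split; reflexivity.
Qed.

End PhysicalParameters.

Theorem proposition2 (L phi kf ks hv cpf mc Ac Tb qHG : R)
  (hL : 0 < L) (hphi : 0 < phi < 1) (hkf : 0 < kf) (hks : 0 < ks)
  (hhv : 0 < hv) (hcpf : 0 < cpf) (hmc : 0 < mc) (hAc : 0 < Ac) :
  (* (1) existence and uniqueness (uniqueness on [0, L]) *)
  ((exists Tf Ts, is_solution L phi kf ks hv cpf mc Ac Tb qHG Tf Ts) /\
   (forall Tf Ts Tf' Ts',
      is_solution L phi kf ks hv cpf mc Ac Tb qHG Tf Ts ->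
      is_solution L phi kf ks hv cpf mc Ac Tb qHG Tf' Ts' ->
      forall y, 0 <= y <= L -> Tf y = Tf' y /\ Ts y = Ts' y)) /\
  (* (2) qHG > 0 *)
  (0 < qHG -> forall Tf Ts,
      is_solution L phi kf ks hv cpf mc Ac Tb qHG Tf Ts ->
      (forall y, 0 < y <= L -> Ts y - Tf y > 0) /\
      (forall x y, 0 <= x -> x <= y -> y <= L -> Tf x <= Tf y) /\
      (forall y, 0 <= y <= L -> Tb <= Tf y) /\
      (forall x y, 0 <= x -> x <= y -> y <= L -> Ts x <= Ts y) /\
      (forall y, 0 <= y <= L -> Tb <= Ts y)) /\
  (* (3) qHG = 0 *)
  (qHG = 0 -> forall Tf Ts,
      is_solution L phi kf ks hv cpf mc Ac Tb qHG Tf Ts ->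
      forall y, 0 <= y <= L -> Tf y = Tb /\ Ts y = Tb).
Proof.
  split; [split|split].
  - apply is_solution_exists; assumption.
  - apply is_solution_unique; assumption.
  - intros hq Tf Ts. apply is_solution_heated; assumption.
  - intros hq Tf Ts. apply is_solution_insulated; assumption.
Qed.
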